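(* Let $n\geq1$, $\sigma\in PGL_{2n+2}(\mathbb{C})$ and let $\tilde\sigma\in GL_{2n+2}(\mathbb{C})$ be a representative of $\sigma$. If $\operatorname{rank}(\tilde\sigma-\alpha I)\geq n+1$ for every $\alpha\in\mathbb{C}$, then there is an $n$-dimensional projective linear subspace $\ell\subset\mathbb{P}^{2n+1}$ such that $\sigma(\ell)\cap\ell=\emptyset$. *)

(* The complex numbers are modelled as R[i] = complex R for an
   arbitrary R : realType (mathcomp-real-closed's complex; a closedFieldType). *)
From mathcomp Require Import all_boot all_algebra.
From mathcomp Require Export reals complex.
Set Implicit Arguments.
Unset Strict Implicit.
Unset Printing Implicit Defensive.
Import GRing.Theory Num.Theory.
Local Open Scope ring_scope.

(* Image of the linear subspace spanned by the rows of L under the linear map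
   v |-> A v (A acting on column vectors); in row coordinates v^T |-> v^T A^T. *)
Definition mx_image (F : fieldType) (m k : nat) (A : 'M[F]_k) (L : 'M[F]_(m, k))
  : 'M[F]_(m, k) := L *m A^T.

From mathcomp Require Import all_boot all_algebra.
From mathcomp Require Import reals complex.
From mathcomp Require Import zify.
From Stdlib Require Import Classical.
Import GRing.Theory Num.Theory.
Local Open Scope ring_scope.
Set Implicit Arguments.
Unset Strict Implicit.
Unset Printing Implicit Defensive.

(* Let B be a 2k x 2k matrix over an algebraically closed field with
   rank (B - b) >= k for all b, and call b critical when equality holds; the
   theorem is the case B = A^T (acting on row vectors), k = n + 1.  We find a
   k-dimensional L meeting L B only in 0, by induction on k.  Choose v such
   that the plane W = <v, v B> is B-stable, B is not scalar on W, and W is not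
   contained in the row space of B - b for any critical b.  In a basis starting
   with W, B is block lower triangular with a square block D of size 2(k - 1);
   the last condition keeps rank (D - b) >= k - 1 for every b, so induction
   gives L' for D, and L' together with the line <v> works for B because v B
   is not in <v>.  Such a v exists: if B has two distinct eigenvalues, take the
   sum of two eigenvectors for distinct eigenvalues, the first one taken in a
   critical eigenspace but outside the row space of B - b if some b is
   critical; if B has a single eigenvalue l, take v with
   v (B - l) <> 0 = v (B - l)^2, shifted by an eigenvector outside the row
   space of B - l if needed. *)

Section MatrixFacts.
Variable F : fieldType.

Lemma addmx_subr m1 m2 n (A B : 'M[F]_(m1, n)) (C : 'M_(m2, n)) :
  (A <= C)%MS -> ((A + B)%R <= C)%MS = (B <= C)%MS.
Proof.
move=> sAC; apply/idP/idP => [sABC|]; last exact: addmx_sub sAC.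
by rewrite -(addKr A B) addmx_sub // eqmx_opp.
Qed.

Lemma mxrank_col_mx2 n (x y : 'rV[F]_n) :
  x != 0 -> ~~ (y <= x)%MS -> \rank (col_mx x y) = 2%N.
Proof.
move=> x0 yx; apply/eqP; rewrite eqn_leq rank_leq_row /=.
have sx : (x <= col_mx x y)%MS by rewrite -addsmxE addsmxSl.
have := mxrank_leqif_sup sx; rewrite rank_rV x0 => /ltn_leqif ->.
by apply: contra yx; apply: submx_trans; rewrite -addsmxE addsmxSr.
Qed.

Lemma unitmx_completion p q (W : 'M[F]_(p, p + q)) :
  \rank W = p -> exists2 P : 'M_(p + q), P \in unitmx & usubmx P = W.
Proof.
move=> rW; exists (block_mx (col_ebase W) 0 0 1%:M *m row_ebase W).
  by rewrite unitmx_mul row_ebase_unit unitmxE det_lblock det1 mulr1 -unitmxE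
             col_ebase_unit.
rewrite -mul_usub_mx block_mxEv col_mxKu.
by have := mulmx_ebase W; rewrite rW pid_mx_row mul_mx_row mulmx1 mulmx0.
Qed.

Lemma stable_block_lower p q (B : 'M[F]_(p + q)) (W : 'M_(p, p + q)) :
  \rank W = p -> stablemx W B ->
  exists P C X D, [/\ P \in unitmx, usubmx P = W, C *m W = W *m B &
                      P *m B *m invmx P = block_mx C 0 X D].
Proof.
move=> rW /submxP[C CW]; have [P Pu PW] := unitmx_completion rW.
set B' := P *m B *m invmx P.
have uB' : usubmx B' = row_mx C 0.
  apply: (can_inj (mulmxK Pu)); rewrite mul_usub_mx mulmxKV // -mul_usub_mx PW CW.
  by rewrite -[P in RHS]vsubmxK mul_row_col mul0mx addr0 PW.
exists P, C, (dlsubmx B'), (drsubmx B'); split => //.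
rewrite -[LHS]submxK; congr block_mx.
  by rewrite /ulsubmx uB' row_mxKl.
by rewrite /ursubmx uB' row_mxKr.
Qed.

Lemma mxrank_block_lower p q (C : 'M[F]_p) (X : 'M_(q, p)) (D : 'M_q) :
  (\rank (block_mx C 0 X D) <=
     \rank (row_mx 1%:M 0 :&: block_mx C 0 X D) + \rank D)%N.
Proof.
set M := block_mx C 0 X D; set E : 'M_(p, p + q) := row_mx 1%:M 0.
set G := block_mx (1%:M : 'M_p) 0 0 D.
have MG : (M <= G)%MS.
  apply/submxP; exists (block_mx C 0 X 1%:M).
  by rewrite mulmx_block !mulmx0 !mul0mx !mulmx1 !mul1mx !addr0 !add0r.
have EG : (E <= G)%MS.
  apply/submxP; exists E.
  by rewrite mul_row_block !mulmx0 !mul0mx !mulmx1 !addr0.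
have := mxrank_sum_cap E M; rewrite capmxC.
have : (\rank (E + M) <= \rank G)%N by rewrite mxrankS // addsmx_sub EG MG.
by rewrite rank_diag_block_mx mxrank1 rank_row_mx0 mxrank1; lia.
Qed.

Lemma mxrank_shift_block_lower p q (B P : 'M[F]_(p + q)) C X D (b : F) :
  P \in unitmx -> P *m B *m invmx P = block_mx C 0 X D ->
  (\rank (B - b%:M)%R <=
     \rank (usubmx P :&: (B - b%:M)%R) + \rank (D - b%:M)%R)%N.
Proof.
move=> Pu B'E; have Pfree : row_free P by rewrite row_free_unit.
have shiftE : P *m (B - b%:M) *m invmx P = block_mx (C - b%:M) 0 X (D - b%:M).
  rewrite mulmxBr mulmxBl mul_mx_scalar -scalemxAl mulmxV // scalemx1 B'E.
  by rewrite (scalar_mx_block p q b) opp_block_mx add_block_mx !oppr0 !addr0.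
have rank_conj : \rank (B - b%:M) = \rank (P *m (B - b%:M) *m invmx P).
  by rewrite mxrankMfree ?row_free_unit ?unitmx_inv // eqmxMfull ?row_full_unit.
rewrite rank_conj shiftE (leq_trans (mxrank_block_lower _ _ _)) // leq_add2r.
have EP : row_mx 1%:M 0 *m P = usubmx P.
  by rewrite -{1}[P]vsubmxK mul_row_col mul1mx mul0mx addr0.
rewrite -(mxrankMfree _ Pfree) mxrankS // (submx_trans (capmxMr _ _ _)) //.
by rewrite EP -shiftE mulmxKV // capmxS ?submxMl.
Qed.

Lemma eigenvector_shift n m (B : 'M[F]_n) (W : 'M_(m, n)) (mu b : F) :
  W *m B = mu *: W -> W *m (B - b%:M) = (mu - b) *: W.
Proof. by move=> WB; rewrite mulmxBr WB mul_mx_scalar scalerBl. Qed.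

Lemma eigenvector_sub_shift n m (B : 'M[F]_n) (W : 'M_(m, n)) (mu b : F) :
  W *m B = mu *: W -> mu != b -> (W <= B - b%:M)%MS.
Proof.
move=> WB mub; have {1}-> : W = (mu - b)^-1 *: (W *m (B - b%:M)).
  by rewrite (eigenvector_shift _ WB) scalerA mulVf ?scale1r // subr_eq0.
by rewrite scalemx_sub // submxMl.
Qed.

Lemma eigenvalue_uniq n (B : 'M[F]_n) (x : 'rV_n) (l m : F) :
  x != 0 -> x *m B = l *: x -> x *m B = m *: x -> l = m.
Proof.
move=> x0 ->; move/eqP; rewrite -subr_eq0 -scalerBl scaler_eq0 (negbTE x0) orbF.
by rewrite subr_eq0 => /eqP.
Qed.

End MatrixFacts.

Section DisjointPreimage.
Variable F : fieldType.

Definition disjoint_preimage n m (B : 'M[F]_n) (L : 'M[F]_(m, n)) :=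
  forall u : 'rV_n, (u <= L)%MS -> (u *m B <= L)%MS -> u = 0.

Lemma disjoint_preimage_capmx n m (B : 'M[F]_n) (L : 'M_(m, n)) :
  disjoint_preimage B L -> \rank (L :&: L *m B)%MS = 0%N.
Proof.
move=> dL; apply/eqP; rewrite mxrank_eq0 -submx0; apply/rV_subP => x.
rewrite sub_capmx => /andP[xL /submxP[y xE]].
rewrite xE mulmxA (dL (y *m L)) ?mul0mx ?sub0mx ?submxMl //.
by rewrite -mulmxA -xE.
Qed.

Lemma disjoint_preimage_conj n (B P : 'M[F]_n) m (L : 'M_(m, n)) :
  P \in unitmx -> disjoint_preimage (P *m B *m invmx P) L ->
  disjoint_preimage B (L *m P).
Proof.
move=> Pu dL u uL uBL; have Pfree : row_free P by rewrite row_free_unit.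
have /dL u0 : (u *m invmx P <= L)%MS by rewrite -(submxMfree _ _ Pfree) mulmxKV.
have /u0 : (u *m invmx P *m (P *m B *m invmx P) <= L)%MS.
  by rewrite !mulmxA mulmxKV // -(submxMfree _ _ Pfree) mulmxKV.
by move/(congr1 (mulmx^~ P)); rewrite mulmxKV // mul0mx.
Qed.

Lemma disjoint_preimage_block p q (C : 'M[F]_p) (X : 'M_(q, p)) (D : 'M_q)
    r s (L1 : 'M_(r, p)) (L2 : 'M_(s, q)) :
  disjoint_preimage C L1 -> disjoint_preimage D L2 ->
  disjoint_preimage (block_mx C 0 X D) (block_mx L1 0 0 L2).
Proof.
move=> dL1 dL2 u /submxP[a ->] /submxP[b].
rewrite -[a]hsubmxK -[b]hsubmxK !mul_row_block !mulmx0 !addr0 !add0r.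
move=> /eq_row_mx[E1 E2].
have a2 : rsubmx a *m L2 = 0 by apply: dL2; [exact: submxMl | rewrite E2 submxMl].
rewrite a2 mul0mx addr0 in E1.
have a1 : lsubmx a *m L1 = 0 by apply: dL1; [exact: submxMl | rewrite E1 submxMl].
by rewrite a1 a2 row_mx0.
Qed.

Lemma disjoint_preimage_rV p n (C : 'M[F]_p) (W : 'M_(p, n)) (B : 'M_n) (a : 'rV_p) :
  C *m W = W *m B -> ~~ stablemx (a *m W) B -> disjoint_preimage C a.
Proof.
move=> CW nstab u /sub_rVP[c ->] /sub_rVP[d].
move=> /(congr1 (mulmx^~ W)) /=; rewrite -!scalemxAl -mulmxA CW mulmxA => E.
have [->|c0] := eqVneq c 0; first by rewrite scale0r.
case/negP: nstab; apply/sub_rVP; exists (c^-1 * d).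
by rewrite -scalerA -E scalerA mulVf // scale1r.
Qed.

End DisjointPreimage.

Section ReducingVector.
Variable F : fieldType.

Definition reducing_vector k (B : 'M[F]_(k.*2.+2)) (v : 'rV_(k.*2.+2)) :=
  [/\ ~~ stablemx v B, (v *m B *m B <= col_mx v (v *m B))%MS &
      forall b, (\rank (B - b%:M)%R <= k.+1)%N -> ~~ (v <= B - b%:M)%MS].

Lemma quadratic_stable n (B : 'M[F]_n) (v : 'rV_n) (l m : F) :
  v *m (B - l%:M) *m (B - m%:M) = 0 -> (v *m B *m B <= col_mx v (v *m B))%MS.
Proof.
move=> vlm; set W := col_mx v (v *m B).
have vW : (v <= W)%MS by rewrite -addsmxE addsmxSl.
have vBW : (v *m B <= W)%MS by rewrite -addsmxE addsmxSr.
have vmW : (v *m (B - m%:M) <= W)%MS.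
  by rewrite mulmxBr mul_mx_scalar addmx_sub ?eqmx_opp ?scalemx_sub.
have vB : v *m B = v *m (B - l%:M) + l *: v by rewrite mulmxBr mul_mx_scalar subrK.
have vBB : v *m B *m B = v *m B *m (B - m%:M) + m *: (v *m B).
  by rewrite mulmxBr mul_mx_scalar subrK.
by rewrite vBB {1}vB mulmxDl vlm add0r -scalemxAl addmx_sub ?scalemx_sub.
Qed.

Lemma add_eigenvectors_quadratic_stable n (B : 'M[F]_n) (e f : 'rV_n) (l m : F) :
  e *m B = l *: e -> f *m B = m *: f ->
  ((e + f)%R *m B *m B <= col_mx (e + f)%R ((e + f)%R *m B))%MS.
Proof.
move=> eB fB; apply: (quadratic_stable (l := l) (m := m)).
rewrite mulmxDl (eigenvector_shift _ eB) (eigenvector_shift _ fB) subrr scale0r.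
by rewrite add0r -scalemxAl (eigenvector_shift _ fB) subrr scale0r scaler0.
Qed.

Lemma add_eigenvectors_nonstable n (B : 'M[F]_n) (e f : 'rV_n) (l m : F) :
  e *m B = l *: e -> f *m B = m *: f -> e != 0 -> f != 0 -> l != m ->
  ~~ stablemx (e + f)%R B.
Proof.
move=> eB fB e0 f0 lm; apply/negP => /sub_rVP[s efB].
have : (e + f) *m (B - s%:M) *m (B - l%:M) = 0.
  by rewrite (eigenvector_shift _ efB) subrr scale0r mul0mx.
rewrite mulmxDl (eigenvector_shift _ eB) (eigenvector_shift _ fB) mulmxDl.
rewrite -!scalemxAl (eigenvector_shift _ eB) (eigenvector_shift _ fB).
rewrite subrr scale0r scaler0 add0r scalerA => /eqP.
rewrite scaler_eq0 (negbTE f0) orbF mulf_eq0 !subr_eq0 [m == l]eq_sym (negbTE lm).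
rewrite orbF => /eqP ms.
move: efB; rewrite mulmxDl eB fB -ms scalerDr => /addIr/eqP.
by rewrite -subr_eq0 -scalerBl scaler_eq0 (negbTE e0) orbF subr_eq0 (negbTE lm).
Qed.

Lemma shift_nilpotent_nonstable n (B : 'M[F]_n) (v : 'rV_n) (l : F) :
  v *m (B - l%:M) != 0 -> v *m (B - l%:M) *m (B - l%:M) = 0 -> ~~ stablemx v B.
Proof.
move=> vN vNN; apply/negP => /sub_rVP[s vB].
move: vNN vN; rewrite !(eigenvector_shift _ vB) -scalemxAl (eigenvector_shift _ vB).
rewrite scalerA => /eqP; rewrite scaler_eq0 mulf_eq0 orbb.
by case/orP => /eqP->; rewrite ?scale0r ?scaler0 eqxx.
Qed.

Lemma disjoint_preimage_step k (B : 'M[F]_(k.*2.+2)) (v : 'rV_(k.*2.+2)) :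
  (forall D : 'M[F]_(k.*2), (forall b, (k <= \rank (D - b%:M)%R)%N) ->
     exists2 L : 'M_(k, k.*2), \rank L = k & disjoint_preimage D L) ->
  (forall b, (k.+1 <= \rank (B - b%:M)%R)%N) -> reducing_vector B v ->
  exists2 L : 'M_(k.+1, k.*2.+2), \rank L = k.+1 & disjoint_preimage B L.
Proof.
move=> IH rankB [nstab vBB crit].
have v0 : v != 0 by apply: contraNneq nstab => ->; rewrite mul0mx sub0mx.
set W := col_mx v (v *m B).
have rW : \rank W = 2%N by apply: mxrank_col_mx2.
have sW : stablemx W B by rewrite mul_col_mx col_mx_sub vBB -addsmxE addsmxSr.
(* Block size [1 + 1], as in the type of [W]; [2] would not match it syntactically. *)
have [P [C [X [D [Pu PW CW B'E]]]]] := @stable_block_lower _ (1 + 1) k.*2 B W rW sW.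
have rankD b : (k <= \rank (D - b%:M)%R)%N.
  have := mxrank_shift_block_lower b Pu B'E; rewrite PW => shift.
  have capW : (\rank (W :&: (B - b%:M)%R) <= 2)%N by rewrite -rW mxrankS ?capmxSl.
  have [/crit vB | hb] := leqP (\rank (B - b%:M)%R) k.+1.
    (* W meets the row space of B - b in at most a line. *)
    rewrite -ltnS; apply: leq_trans (rankB b) (leq_trans shift _).
    apply: (@leq_add _ _ 1 _ _ (leqnn _)); rewrite -ltnS -rW.
    rewrite (ltn_leqif (mxrank_leqif_sup (capmxSl _ _))).
    apply: contra vB => /submx_trans/(_ (capmxSr _ _)) WB.
    by apply: submx_trans WB; rewrite -addsmxE addsmxSl.
  rewrite -(leq_add2l 2); apply: leq_trans hb (leq_trans shift _).
  exact: leq_add capW (leqnn _).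
have [L2 rL2 dL2] := IH D rankD.
pose a : 'rV[F]_(1 + 1) := row_mx 1 0.
have aW : a *m W = v by rewrite mul_row_col mul1mx mul0mx addr0.
have a0 : a != 0 by apply: contraNneq v0 => a0; rewrite -aW a0 mul0mx.
exists (block_mx a 0 0 L2 *m P).
  rewrite mxrankMfree ?row_free_unit //.
  by have := rank_diag_block_mx a L2; rewrite rL2 rank_rV a0.
apply: disjoint_preimage_conj Pu _; rewrite B'E.
apply: (@disjoint_preimage_block _ _ _ C X D 1 k a L2) => //.
by apply: disjoint_preimage_rV CW _; rewrite aW.
Qed.

End ReducingVector.

Section ClosedField.
Variable F : closedFieldType.

Lemma exists_eigenvalue n (B : 'M[F]_n) : (0 < n)%N -> exists a, eigenvalue B a.
Proof.
move=> n_gt0; have /closed_rootP[a rBa] : size (char_poly B) != 1%N.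
  by rewrite size_char_poly; case: n n_gt0 B.
by exists a; rewrite eigenvalue_root_char.
Qed.

Lemma stable_eigenvector n r (B : 'M[F]_n) (S : 'M_(r, n)) :
  stablemx S B -> S != 0 ->
  exists a (w : 'rV_n), [/\ w != 0, (w <= S)%MS & w *m B = a *: w].
Proof.
move=> sS S0; pose V := row_base S.
have rS : (0 < \rank S)%N by rewrite lt0n mxrank_eq0.
have [a /eigenvalueP[x xa x0]] := exists_eigenvalue (conjmx V B) rS.
have : (x <= eigenspace (conjmx V B) a)%MS by apply/eigenspaceP.
rewrite sub_eigenspace_conjmx ?stablemx_row_base ?row_base_free // => /eigenspaceP xVa.
exists a, (x *m V); split => //; first by rewrite mulmx_free_eq0 ?row_base_free.
by rewrite (submx_trans (submxMl x V)) ?eq_row_base.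
Qed.

Variables (k : nat) (B : 'M[F]_(k.*2.+2)).
Hypothesis rankB : forall b, (k.+1 <= \rank (B - b%:M)%R)%N.
Local Notation critical b := (\rank (B - b%:M)%R <= k.+1)%N.

Lemma critical_rank b : critical b -> \rank (B - b%:M) = k.+1.
Proof. by move=> cb; apply/eqP; rewrite eqn_leq cb rankB. Qed.

Lemma critical_eigenspace_rank b : critical b -> \rank (eigenspace B b) = k.+1.
Proof.
by move=> cb; rewrite mxrank_ker critical_rank // -addnn subSS -addSn addnK.
Qed.

Lemma critical_shift_sub_eigenspace b c :
  critical b -> critical c -> b != c -> (B - c%:M <= eigenspace B b)%MS.
Proof.
move=> cb cc bc; have /eigenspaceP Eb := submx_refl (eigenspace B b).
have sE := eigenvector_sub_shift Eb bc.
by rewrite -(geq_leqif (mxrank_leqif_sup sE)) critical_rank ?critical_eigenspace_rank.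
Qed.

Lemma critical_eigenspace_sub_shift b : critical b ->
  (eigenspace B b <= B - b%:M)%MS -> (B - b%:M <= eigenspace B b)%MS.
Proof.
move=> cb sE.
by rewrite -(geq_leqif (mxrank_leqif_sup sE)) critical_rank ?critical_eigenspace_rank.
Qed.

Lemma two_eigenvalues_reducing (e f : 'rV_(k.*2.+2)) (l m : F) :
  e *m B = l *: e -> f *m B = m *: f -> e != 0 -> f != 0 -> l != m ->
  exists v, reducing_vector B v.
Proof.
move=> eB fB e0 f0 lm.
have [[b cb] | no_critical] := classic (exists b, critical b); last first.
  exists (e + f); split; first exact: add_eigenvectors_nonstable eB fB e0 f0 lm.
    exact: add_eigenvectors_quadratic_stable eB fB.
  by move=> b cb; case: no_critical; exists b.
have [f' [m' [f'0 f'B m'b]]] :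
    exists (f' : 'rV_(k.*2.+2)) m', [/\ f' != 0, f' *m B = m' *: f' & m' != b].
  by case: (eqVneq m b) => [mb | ?]; [exists e, l; rewrite -mb | exists f, m].
have f'N : (f' <= B - b%:M)%MS := eigenvector_sub_shift f'B m'b.
have f'E : ~~ (f' <= eigenspace B b)%MS.
  by apply: contra m'b => /eigenspaceP/(eigenvalue_uniq f'0 f'B)->.
have /row_subPn[i eN] : ~~ (eigenspace B b <= B - b%:M)%MS.
  by apply: contra f'E => /(critical_eigenspace_sub_shift cb); apply: submx_trans.
set e' := row i _ in eN; have e'E : (e' <= eigenspace B b)%MS := row_sub i _.
have /eigenspaceP e'B := e'E.
have e'0 : e' != 0 by apply: contraNneq eN => ->; rewrite sub0mx.
exists (e' + f'); split.
- by apply: add_eigenvectors_nonstable e'B f'B e'0 f'0 _; rewrite eq_sym.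
- exact: add_eigenvectors_quadratic_stable e'B f'B.
move=> c cc; have [-> | cb'] := eqVneq c b; first by rewrite addrC addmx_subr.
apply: contra f'E => /submx_trans/(_ (critical_shift_sub_eigenspace cb cc _)).
by rewrite eq_sym addmx_subr // => ->.
Qed.

Lemma one_eigenvalue_reducing (l : F) :
  (forall m (x : 'rV_(k.*2.+2)), x *m B = m *: x -> x != 0 -> m = l) ->
  exists v, reducing_vector B v.
Proof.
move=> only_l; set N := (B - l%:M)%R.
have N0 : N != 0 by rewrite -mxrank_eq0 -lt0n (leq_trans _ (rankB l)).
have [u uN uNN] : exists2 u : 'rV_(k.*2.+2), u *m N != 0 & u *m N *m N = 0.
  have sN : stablemx N B.
    by rewrite /N mulmxBl mul_scalar_mx -mul_mx_scalar -mulmxBr submxMl.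
  have [a [w [w0 /submxP[u wE] wB]]] := stable_eigenvector sN N0.
  by exists u; rewrite -wE // (eigenvector_shift _ wB) (only_l _ _ wB w0) subrr scale0r.
have critical_l c : critical c -> c = l.
  move=> cc; have : eigenspace B c != 0 by rewrite -mxrank_eq0 critical_eigenspace_rank.
  by case/rowV0Pn => x /eigenspaceP xB x0; rewrite (only_l c x).
have reducing v : v *m N != 0 -> v *m N *m N = 0 ->
    (critical l -> ~~ (v <= N)%MS) -> reducing_vector B v.
  move=> vN vNN vl; split; first exact: shift_nilpotent_nonstable vN vNN.
    exact: quadratic_stable vNN.
  by move=> c /[dup] /critical_l ->.
have [cl | ncl] := boolP (critical l); last first.
  by exists u; apply: reducing => // /(negP ncl).
have [uN' | ?] := boolP (u <= N)%MS; last by exists u; apply: reducing.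
have /row_subPn[i eN] : ~~ (eigenspace B l <= N)%MS.
  apply: contra uN => /(critical_eigenspace_sub_shift cl) NE.
  by apply/eqP/sub_kermxP; apply: submx_trans uN' NE.
set e := row i _ in eN; have eN0 : e *m N = 0 by apply/sub_kermxP; exact: row_sub.
exists (u + e); apply: reducing; rewrite ?mulmxDl ?eN0 ?mul0mx ?addr0 //.
by rewrite addmx_subr.
Qed.

Lemma exists_reducing_vector : exists v, reducing_vector B v.
Proof.
have [l /eigenvalueP[e eB e0]] := exists_eigenvalue B (ltn0Sn _).
have [[m [f [fB f0 ml]]] | none] :=
  classic (exists m (f : 'rV_(k.*2.+2)), [/\ f *m B = m *: f, f != 0 & m != l]).
  by apply: two_eigenvalues_reducing eB fB e0 f0 _; rewrite eq_sym.
apply: (@one_eigenvalue_reducing l) => m x xB x0.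
by apply: contra_not_eq none => ml; exists m, x.
Qed.

End ClosedField.

Lemma exists_disjoint_preimage (F : closedFieldType) k (B : 'M[F]_(k.*2)) :
  (forall b, (k <= \rank (B - b%:M)%R)%N) ->
  exists2 L : 'M_(k, k.*2), \rank L = k & disjoint_preimage B L.
Proof.
elim: k B => [|k IH] B rankB.
  by exists 0; [rewrite mxrank0 | move=> u _ _; rewrite [u]thinmx0].
have [v hv] := exists_reducing_vector rankB.
exact: disjoint_preimage_step IH rankB hv.
Qed.

Theorem lemma5p4 (R : realType) (n : nat) (A : 'M[R[i]]_(n.*2.+2)) :
  (1 <= n)%N ->
  A \in unitmx ->
  (forall alpha : R[i], (n.+1 <= \rank (A - alpha%:M)%R)%N) ->
  exists L : 'M[R[i]]_(n.+1, n.*2.+2),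
    \rank L = n.+1 /\ \rank (L :&: mx_image A L)%MS = 0%N.
Proof.
move=> _ _ rankA.
have rankAT b : (n.+1 <= \rank (A^T - b%:M)%R)%N.
  by rewrite -mxrank_tr linearB /= trmxK tr_scalar_mx.
have [L rL dL] := exists_disjoint_preimage rankAT.
by exists L; split; last exact: disjoint_preimage_capmx.
Qed.
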